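(* Let $z\in\mathbf{Z}$, $z\neq0$, and let $m\geq0$ be such that $z\in\mathfrak{C}_0^m\mathbf{Z}$. Write $z=\sum_{w\in W}z_w w$ with $z_w\in\mathbb{C}[\mathcal{C}]\otimes\mathbb{C}[V]\otimes\mathbb{C}[V^*]$. Then $z_w\in\mathfrak{C}_0^{m+1}\bigl(\mathbb{C}[\mathcal{C}]\otimes\mathbb{C}[V]\otimes\mathbb{C}[V^*]\bigr)$ for all $w\in W\setminus\{1\}$.
   Context: Let $V$ be a finite-dimensional complex vector space and $W\subseteq\mathrm{GL}(V)$ a finite group generated by its set $\mathrm{Ref}(W)$ of reflections. Let $\varepsilon=\det$. For $s\in\mathrm{Ref}(W)$ choose $\alpha_s\in V^*$ with $(V^s)^\perp=\mathbb{C}\alpha_s$ and $\alpha_s^\vee\in V$ with $((V^* )^s)^\perp=\mathbb{C}\alpha_s^\vee$; identify $\mathbb{C}[V]=S(V^* )$, $\mathbb{C}[V^*]=S(V)$. $\mathbb{C}[\mathcal{C}]$ is the polynomial ring in indeterminates $C_s$ indexed by conjugacy classes of reflections. The generic rational Cherednik algebra $\mathbf{H}$ (at $t=0$) is the quotient of $\mathbb{C}[\mathcal{C}]\otimes(T(V\oplus V^* )\rtimes W)$ by $[x,x']=[y,y']=0$ and $[y,x]=\sum_{s}(\varepsilon(s)-1)C_s\frac{\langle y,\alpha_s\rangle\langle\alpha_s^\vee,x\rangle}{\langle\alpha_s^\vee,\alpha_s\rangle}s$ ($x,x'\in V^*$, $y,y'\in V$). By the PBW theorem every element of $\mathbf{H}$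 is uniquely $\sum_{w\in W}h_w w$ with $h_w\in\mathbb{C}[\mathcal{C}]\otimes\mathbb{C}[V]\otimes\mathbb{C}[V^*]$. $\mathbf{Z}$ is the center of $\mathbf{H}$ and $\mathfrak{C}_0$ the ideal of $\mathbb{C}[\mathcal{C}]$ generated by all $C_s$. *)

From HB Require Import structures.
From mathcomp Require Import all_boot all_order all_algebra all_fingroup.
From mathcomp Require Import mxrepresentation.
From mathcomp Require Import reals.
From mathcomp Require Import complex.
From mathcomp Require Import mpoly.

Set Implicit Arguments.
Unset Strict Implicit.
Unset Printing Implicit Defensive.

Import GRing.Theory Num.Theory.
Local Open Scope ring_scope.

(* Conventions.  n = dim V.  V = column vectors 'cV_n, Vdual = row vectors 'rV_n,
   with pairing <x, v> = (x *m v) 0 0.  The finite group W (a group in a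
   finGroupType gT) acts on V through a representation rG : g |-> rG g
   (g . v = rG g *m v) and hence on Vdual contragrediently
   (g . x = x *m rG g^-1). *)

Section Defs.

Variable C : fieldType.
Variable n : nat.

Definition pairing (x : 'rV[C]_n) (v : 'cV[C]_n) : C := (x *m v) 0 0.

Variable gT : finGroupType.
Variable W : {group gT}.
Variable rG : mx_representation C W n.

(* s is a reflection: its fixed space V^s is a hyperplane, i.e. rank(s - 1) = 1 *)
Definition reflections : {set gT} :=
  [set s in W | \rank (rG s - 1%:M) == 1%N].

(* (V^s)^perp = C a   (inside Vdual) *)
Definition root_spec (s : gT) (a : 'rV[C]_n) : Prop :=
  forall x : 'rV[C]_n,
    (exists c : C, x = c *: a) <->
    (forall v : 'cV[C]_n, rG s *m v = v -> pairing x v = 0).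

(* ((Vdual )^s)^perp = C b   (inside V) *)
Definition coroot_spec (s : gT) (b : 'cV[C]_n) : Prop :=
  forall v : 'cV[C]_n,
    (exists c : C, v = c *: b) <->
    (forall x : 'rV[C]_n, x *m rG (s^-1)%g = x -> pairing x v = 0).

End Defs.

(* Powers of an ideal generated by a finite family: p lies in I^m, where
   I is the ideal of the commutative ring A generated by g_0, ..., g_{k-1},
   iff p is a finite sum of (ring element) * (product of m generators). *)
Definition in_ideal_pow (A : comPzRingType) (k : nat) (g : 'I_k -> A) (m : nat)
  (p : A) : Prop :=
  exists (N : nat) (a : 'I_N -> A) (f : 'I_N -> 'I_m -> 'I_k),
    p = \sum_(i < N) a i * \prod_(j < m) g (f i j).

(* The polynomial ring C[C] (x) C[V] (x) C[Vdual] is modelled as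
   {mpoly C[k + n + n]}: variables lshift n (lshift n c) are the C_c
   (c < k, one per conjugacy class of reflections), variables
   lshift n (rshift k i) are the coordinates x_i (basis of Vdual),
   and rshift (k + n) i are the y_i (basis of V). *)
Section Vars.
Variables k n : nat.
Definition cvar (c : 'I_k) : 'I_(k + n + n) := lshift n (lshift n c).
Definition xvar (i : 'I_n) : 'I_(k + n + n) := lshift n (rshift k i).
Definition yvar (i : 'I_n) : 'I_(k + n + n) := rshift (k + n) i.
End Vars.

Section Alg.
Variable C : fieldType.
Variables k n : nat.
Variable H : algType C.
Variable Cv : 'I_k -> H.   (* images of the C_c in H *)
Variable X : 'I_n -> H.    (* images of the basis x_i of Vdual *)
Variable Y : 'I_n -> H.    (* images of the basis y_i of V *)

Definition centralH (z : H) : Prop := forall h : H, z * h = h * z.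

Definition Xl (x : 'rV[C]_n) : H := \sum_(i < n) x 0 i *: X i.
Definition Yl (v : 'cV[C]_n) : H := \sum_(i < n) v i 0 *: Y i.

Definition evalC (p : {mpoly C[k]}) : H :=
  \sum_(mm <- msupp p) p@_mm *: \prod_(c < k) Cv c ^+ mm c.

(* the PBW embedding of C[C] (x) C[V] (x) C[Vdual] into H, f (x) g (x) h |-> f g h
   (C-part, then x-part, then y-part) *)
Definition evalA (p : {mpoly C[k + n + n]}) : H :=
  \sum_(mm <- msupp p) p@_mm *:
     ((\prod_(c < k) Cv c ^+ mm (@cvar k n c)) *
      (\prod_(i < n) X i ^+ mm (@xvar k n i)) *
      (\prod_(i < n) Y i ^+ mm (@yvar k n i))).

Variable gT : finGroupType.
Variable W : {group gT}.
Variable T : gT -> H.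

Definition pbw (h : {ffun gT -> {mpoly C[k + n + n]}}) : H :=
  \sum_(w in W) evalA (h w) * T w.

Definition in_C0pow_center (m : nat) (z : H) : Prop :=
  exists (N : nat) (c : 'I_N -> {mpoly C[k]}) (u : 'I_N -> H),
    (forall i, in_ideal_pow (fun j : 'I_k => 'X_j) m (c i)) /\
    (forall i, centralH (u i)) /\
    z = \sum_(i < N) evalC (c i) * u i.

End Alg.

(* Generic rational Cherednik algebra at t = 0, given by generators satisfying
   the defining relations together with the PBW property (which determines it
   up to isomorphism). *)
Definition is_generic_RCA (R : realType) (n : nat) (gT : finGroupType)
  (W : {group gT}) (rG : mx_representation R[i] W n) (k : nat)
  (cls : gT -> 'I_k) (root : gT -> 'rV[R[i]]_n) (coroot : gT -> 'cV[R[i]]_n)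
  (H : algType R[i]) (Cv : 'I_k -> H) (X Y : 'I_n -> H) (T : gT -> H) : Prop :=
  (
      forall c, centralH (Cv c)) /\
      (forall i j, X i * X j = X j * X i) /\
      (forall i j, Y i * Y j = Y j * Y i) /\
      (T 1%g = 1 /\ {in W &, forall g h, T (g * h)%g = T g * T h}) /\
      ({in W, forall g (x : 'rV[R[i]]_n),
         T g * Xl X x * T (g^-1)%g = Xl X (x *m rG (g^-1)%g)} /\
      {in W, forall g (v : 'cV[R[i]]_n),
         T g * Yl Y v * T (g^-1)%g = Yl Y (rG g *m v)}) /\
      (forall (x : 'rV[R[i]]_n) (v : 'cV[R[i]]_n),
        Yl Y v * Xl X x - Xl X x * Yl Y v =
        \sum_(s in reflections rG)
          ((\det (rG s) - 1) * pairing (root s) v * pairing x (coroot s)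
             / pairing (root s) (coroot s)) *: (Cv (cls s) * T s)) /\
      (forall h : H, exists f, h = pbw Cv X Y W T f) /\
      (forall f, pbw Cv X Y W T f = 0 -> forall w, w \in W -> f w = 0).

From HB Require Import structures.
From mathcomp Require Import all_boot all_order all_algebra all_fingroup.
From mathcomp Require Import mxrepresentation.
From mathcomp Require Import reals.
From mathcomp Require Import complex.
From mathcomp Require Import mpoly.
Import GRing.Theory Num.Theory.
Local Open Scope ring_scope.
Set Implicit Arguments.
Unset Strict Implicit.
Unset Printing Implicit Defensive.

(** Write [C0 H] for the two-sided ideal [sum_c C_c H] of the Cherednik
algebra; by PBW, [h] lies in [C0 H] iff all its PBW coefficients lie in the
ideal [C0] of the polynomial ring.  Let [u = sum_w u_w w] be central, let
[w <> 1] and pick [x] in [V^*] with [w^-1 . x <> x] (faithfulness).  Since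
[u x = x u], and since [x] commutes with [C[C] (x) C[V] (x) C[V^*]] modulo
[C0 H] (the commutator [[y, x]] lies in [C0 H]) while [w x = (w . x) w], one
gets [(x - w^-1 . x) u_w] in [C0].  As [C0] is prime and [x - w^-1 . x] is a
nonzero linear form avoiding the [C]-variables, [u_w] is in [C0].  Finally
[z] is a [C0^m]-combination of central elements, so its coefficients at
[w <> 1] lie in [C0^(m+1)]. *)

Section IdealPow.
Variables (A : comPzRingType) (k : nat) (g : 'I_k -> A).
Local Notation ideal_pow := (in_ideal_pow g).

Lemma in_ideal_pow0 m : ideal_pow m 0.
Proof.
exists 0%N, (ffun0 (card_ord 0)), (ffun0 (card_ord 0)).
by rewrite big_ord0.
Qed.

Lemma in_ideal_powD m p q : ideal_pow m p -> ideal_pow m q -> ideal_pow m (p + q).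
Proof.
move=> [N1 [a1 [f1 ->]]] [N2 [a2 [f2 ->]]].
exists (N1 + N2)%N, (fun i => match split i with inl j => a1 j | inr j => a2 j end),
  (fun i => match split i with inl j => f1 j | inr j => f2 j end).
rewrite big_split_ord /=; congr (_ + _); apply: eq_bigr => i _.
- by rewrite (unsplitK (inl _ i)).
- by rewrite (unsplitK (inr _ i)).
Qed.

Lemma in_ideal_powMl m r p : ideal_pow m p -> ideal_pow m (r * p).
Proof.
move=> [N [a [f ->]]]; exists N, (fun i => r * a i), f.
by rewrite mulr_sumr; apply: eq_bigr => i _; rewrite mulrA.
Qed.

Lemma in_ideal_pow_sum m (I : Type) (s : seq I) (P : pred I) (F : I -> A) :
  (forall i, P i -> ideal_pow m (F i)) -> ideal_pow m (\sum_(i <- s | P i) F i).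
Proof. exact: (big_ind (ideal_pow m) (in_ideal_pow0 m) (@in_ideal_powD m)). Qed.

Lemma in_ideal_pow_gen c : ideal_pow 1 (g c).
Proof. by exists 1%N, (fun _ => 1), (fun _ _ => c); rewrite !big_ord1 mul1r. Qed.

Lemma in_ideal_powMr_gen m p c : ideal_pow m p -> ideal_pow m.+1 (p * g c).
Proof.
move=> [N [a [f ->]]].
exists N, a, (fun i (j : 'I_m.+1) => odflt c (omap (f i) (insub (val j)))).
rewrite mulr_suml; apply: eq_bigr => i _; rewrite big_ord_recr /= -mulrA.
rewrite insubF ?ltnn //; congr (_ * (_ * _)).
by apply: eq_bigr => j _ /=; rewrite valK.
Qed.

Lemma in_ideal_powM1 m p q :
  ideal_pow m p -> ideal_pow 1 q -> ideal_pow m.+1 (p * q).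
Proof.
move=> hp [N [a [f ->]]]; rewrite mulr_sumr; apply: in_ideal_pow_sum => i _.
by rewrite big_ord1 mulrCA; apply/in_ideal_powMl/in_ideal_powMr_gen.
Qed.

Lemma in_ideal_pow_rmorph (B : comPzRingType) (phi : {rmorphism A -> B})
    (g' : 'I_k -> B) m p :
  (forall c, phi (g c) = g' c) -> ideal_pow m p -> in_ideal_pow g' m (phi p).
Proof.
move=> phig [N [a [f ->]]]; exists N, (fun i => phi (a i)), f.
rewrite rmorph_sum; apply: eq_bigr => i _; rewrite rmorphM rmorph_prod.
by congr (_ * _); apply: eq_bigr => j _; rewrite phig.
Qed.

End IdealPow.

Lemma prodr_exprD_delta (S : pzRingType) (I : finType) (h : I -> S) (i0 : I)
    (e : I -> nat) :
  (forall i j, GRing.comm (h i) (h j)) ->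
  \prod_i h i ^+ ((i0 == i) + e i)%N = h i0 * \prod_i h i ^+ e i.
Proof.
move=> h_comm; under eq_bigr do rewrite exprD.
rewrite prodrM_comm => [|i j _ _]; last exact/commrX/commr_sym/commrX/h_comm.
congr (_ * _); rewrite (eq_bigr (fun i => if i == i0 then h i else 1)) => [|i _].
  by rewrite -big_mkcond big_pred1_eq.
by rewrite eq_sym; case: eqP; rewrite ?expr1 ?expr0.
Qed.

Notation in_C0pow k n := (in_ideal_pow (fun c : 'I_k => 'X_(@cvar k n c))).

Section Evaluation.
Variables (F : fieldType) (k n : nat) (H : algType F).
Variables (Cv : 'I_k -> H) (X Y : 'I_n -> H).
Hypothesis Cv_central : forall c, centralH (Cv c).
Hypothesis X_comm : forall i j, X i * X j = X j * X i.
Local Notation poly := {mpoly F[k + n + n]}.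
Local Notation evalA := (evalA Cv X Y).

Definition ordered_monomial (m : 'X_{1..k + n + n}) : H :=
  (\prod_(c < k) Cv c ^+ m (@cvar k n c)) *
  (\prod_(i < n) X i ^+ m (@xvar k n i)) *
  (\prod_(i < n) Y i ^+ m (@yvar k n i)).

Definition generator (v : 'I_(k + n + n)) : H :=
  match split v with
  | inl v' => match split v' with inl c => Cv c | inr i => X i end
  | inr i => Y i
  end.

Lemma generator_cvar c : generator (@cvar k n c) = Cv c.
Proof. by rewrite /generator /cvar !(unsplitK (inl _ _)). Qed.

Lemma generator_xvar i : generator (@xvar k n i) = X i.
Proof. by rewrite /generator /xvar (unsplitK (inl _ _)) (unsplitK (inr _ _)). Qed.

Lemma generator_yvar i : generator (@yvar k n i) = Y i.
Proof. by rewrite /generator /yvar (unsplitK (inr _ _)). Qed.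

Lemma mmap1_generator m : mmap1 generator m = ordered_monomial m.
Proof.
rewrite /mmap1 !big_split_ord /ordered_monomial.
by congr (_ * _ * _); apply: eq_bigr => i _;
  rewrite ?generator_cvar ?generator_xvar ?generator_yvar.
Qed.

Lemma evalAE p : evalA p = mmap (in_alg H) generator p.
Proof.
by apply: eq_bigr => m _; rewrite /= mulr_algl mmap1_generator.
Qed.

Lemma evalA_is_additive : additive evalA.
Proof. by move=> p q; rewrite !evalAE raddfB. Qed.

HB.instance Definition _ := GRing.isAdditive.Build poly H evalA evalA_is_additive.

Lemma evalA_is_scalable : scalable evalA.
Proof. by move=> c p; rewrite !evalAE mmapZ /= mulr_algl. Qed.

HB.instance Definition _ := GRing.isScalable.Build F poly H *:%R evalA
  evalA_is_scalable.

Lemma evalA_monomial c m : evalA (c *: 'X_[m]) = c *: ordered_monomial m.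
Proof. by rewrite evalAE mmapZ mmapX mmap1_generator /= mulr_algl. Qed.

(* [evalA] is not multiplicative, but left multiplication by a polynomial
   without [y]-variables is compatible with it, as the [y]'s come last in
   ordered monomials. *)
Definition lmul_lift (p : poly) (P : H) := forall q, evalA (p * q) = P * evalA q.

Lemma lmul_lift1 : lmul_lift 1 1.
Proof. by move=> q; rewrite !mul1r. Qed.

Lemma lmul_lift0 : lmul_lift 0 0.
Proof. by move=> q; rewrite !mul0r raddf0. Qed.

Lemma lmul_liftD p P p' P' :
  lmul_lift p P -> lmul_lift p' P' -> lmul_lift (p + p') (P + P').
Proof. by move=> hp hp' q; rewrite mulrDl raddfD /= hp hp' mulrDl. Qed.

Lemma lmul_liftM p P p' P' :
  lmul_lift p P -> lmul_lift p' P' -> lmul_lift (p * p') (P * P').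
Proof. by move=> hp hp' q; rewrite -mulrA hp hp' mulrA. Qed.

Lemma lmul_liftZ c p P : lmul_lift p P -> lmul_lift (c *: p) (c *: P).
Proof.
by move=> hp q; rewrite -scalerAl linearZ /= (hp q) scalerAl.
Qed.

Lemma Cv_prod_central (e : 'I_k -> nat) : centralH (\prod_(c < k) Cv c ^+ e c).
Proof.
move=> h; apply/commr_sym/commr_prod => c _.
exact/commrX/commr_sym/Cv_central.
Qed.

Lemma ordered_monomial_cvar c m :
  ordered_monomial (U_(@cvar k n c) + m) = Cv c * ordered_monomial m.
Proof.
rewrite /ordered_monomial !mulrA; congr (_ * _ * _); last first.
- by apply: eq_bigr => i _; rewrite mnmDE mnm1E /cvar /yvar eq_lrshift.
- by apply: eq_bigr => i _; rewrite mnmDE mnm1E /cvar /xvar eq_lshift eq_lrshift.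
rewrite -prodr_exprD_delta => [|c1 c2]; last exact: Cv_central c1 (Cv c2).
by apply: eq_bigr => c' _; rewrite mnmDE mnm1E /cvar !eq_lshift.
Qed.

Lemma ordered_monomial_xvar i m :
  ordered_monomial (U_(@xvar k n i) + m) = X i * ordered_monomial m.
Proof.
rewrite /ordered_monomial.
have -> : \prod_(j < n) X j ^+ (U_(@xvar k n i) + m)%MM (@xvar k n j) =
          X i * \prod_(j < n) X j ^+ m (@xvar k n j).
  rewrite -prodr_exprD_delta //; apply: eq_bigr => j _.
  by rewrite mnmDE mnm1E /xvar eq_lshift eq_rshift.
rewrite [_ * (X i * _)]mulrA Cv_prod_central -!mulrA.
congr (_ * (_ * (_ * _))); apply: eq_bigr => j _.
- by rewrite mnmDE mnm1E /cvar /xvar eq_lshift eq_rlshift.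
- by rewrite mnmDE mnm1E /xvar /yvar eq_lrshift.
Qed.

Lemma lmul_lift_var v P :
    (forall m, ordered_monomial (U_(v) + m) = P * ordered_monomial m) ->
  lmul_lift 'X_v P.
Proof.
move=> hP q; rewrite [q]mpolyE mulr_sumr !raddf_sum mulr_sumr.
apply: eq_bigr => m _ /=.
by rewrite -scalerAr -mpolyXD !evalA_monomial hP scalerAr.
Qed.

Lemma lmul_lift_cvar c : lmul_lift 'X_(@cvar k n c) (Cv c).
Proof. exact/lmul_lift_var/ordered_monomial_cvar. Qed.

Lemma lmul_liftX p P e : lmul_lift p P -> lmul_lift (p ^+ e) (P ^+ e).
Proof.
move=> hp; elim: e => [|e IHe]; first by rewrite !expr0; exact: lmul_lift1.
by rewrite !exprS; apply: lmul_liftM.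
Qed.

Definition xpoly (x : 'rV[F]_n) : poly := \sum_(i < n) x 0 i *: 'X_(@xvar k n i).

Lemma lmul_lift_xpoly x : lmul_lift (xpoly x) (Xl X x).
Proof.
apply: (big_ind2 lmul_lift lmul_lift0 (fun _ _ _ _ => @lmul_liftD _ _ _ _)) => i _.
exact/lmul_liftZ/lmul_lift_var/ordered_monomial_xvar.
Qed.

Definition cpoly (c : {mpoly F[k]}) : poly :=
  comp_mpoly [tuple 'X_(@cvar k n c) | c < k] c.

Lemma lmul_lift_cpoly c : lmul_lift (cpoly c) (evalC Cv c).
Proof.
rewrite /cpoly {1}[c]mpolyE raddf_sum.
apply: (big_ind2 lmul_lift lmul_lift0 (fun _ _ _ _ => @lmul_liftD _ _ _ _)) => m _.
rewrite /= comp_mpolyZ comp_mpolyX; apply: lmul_liftZ.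
apply: (big_ind2 lmul_lift lmul_lift1 (fun _ _ _ _ => @lmul_liftM _ _ _ _)) => c' _.
by rewrite tnth_mktuple; exact/lmul_liftX/lmul_lift_cvar.
Qed.

End Evaluation.

Section CommutatorsModuloC0.
Variables (F : fieldType) (k n : nat) (H : algType F).
Variables (Cv : 'I_k -> H) (X Y : 'I_n -> H).
Hypothesis Cv_central : forall c, centralH (Cv c).

Definition in_C0H (h : H) :=
  exists hc : 'I_k -> H, h = \sum_(c < k) Cv c * hc c.

Lemma in_C0H0 : in_C0H 0.
Proof. by exists (fun=> 0); rewrite big1 // => c _; rewrite mulr0. Qed.

Lemma in_C0HD a b : in_C0H a -> in_C0H b -> in_C0H (a + b).
Proof.
move=> [ha ->] [hb ->]; exists (fun c => ha c + hb c).
by rewrite -big_split; apply: eq_bigr => c _; rewrite mulrDr.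
Qed.

Lemma in_C0H_mull a h : in_C0H h -> in_C0H (a * h).
Proof.
move=> [hc ->]; exists (fun c => a * hc c); rewrite mulr_sumr.
by apply: eq_bigr => c _; rewrite mulrA -Cv_central mulrA.
Qed.

Lemma in_C0H_mulr h b : in_C0H h -> in_C0H (h * b).
Proof.
move=> [hc ->]; exists (fun c => hc c * b); rewrite mulr_suml.
by apply: eq_bigr => c _; rewrite mulrA.
Qed.

Lemma in_C0HZ a h : in_C0H h -> in_C0H (a *: h).
Proof. by rewrite -mulr_algl; apply: in_C0H_mull. Qed.

Lemma in_C0H_sum (I : Type) (r : seq I) (P : pred I) (G : I -> H) :
  (forall i, P i -> in_C0H (G i)) -> in_C0H (\sum_(i <- r | P i) G i).
Proof. exact: (big_ind in_C0H in_C0H0 in_C0HD). Qed.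

Lemma in_C0H_Cv c h : in_C0H (Cv c * h).
Proof.
exists (fun c' => if c' == c then h else 0); rewrite (bigD1 c) //= eqxx.
by rewrite big1 ?addr0 // => c' /negbTE ->; rewrite mulr0.
Qed.

Definition comm_C0H (a x : H) := in_C0H (a * x - x * a).

Lemma comm_C0H_exact a x : a * x = x * a -> comm_C0H a x.
Proof. by rewrite /comm_C0H => ->; rewrite subrr; exact: in_C0H0. Qed.

Lemma comm_C0HD a b x : comm_C0H a x -> comm_C0H b x -> comm_C0H (a + b) x.
Proof.
rewrite /comm_C0H mulrDl mulrDr opprD addrACA; exact: in_C0HD.
Qed.

Lemma comm_C0HM a b x : comm_C0H a x -> comm_C0H b x -> comm_C0H (a * b) x.
Proof.
move=> ha hb; rewrite /comm_C0H.
have -> : a * b * x - x * (a * b) = a * (b * x - x * b) + (a * x - x * a) * b.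
  by rewrite mulrBr mulrBl !mulrA addrA subrK.
by apply: in_C0HD; [apply: in_C0H_mull | apply: in_C0H_mulr].
Qed.

Lemma comm_C0HZ c a x : comm_C0H a x -> comm_C0H (c *: a) x.
Proof. by rewrite /comm_C0H -scalerAl -scalerAr -scalerBr; apply: in_C0HZ. Qed.

Lemma comm_C0HX a x e : comm_C0H a x -> comm_C0H (a ^+ e) x.
Proof.
move=> ha; elim: e => [|e IHe]; last by rewrite exprS; apply: comm_C0HM.
by rewrite expr0; apply: comm_C0H_exact; rewrite mul1r mulr1.
Qed.

Lemma comm_C0H_prod (I : Type) (r : seq I) (P : pred I) (G : I -> H) x :
  (forall i, P i -> comm_C0H (G i) x) -> comm_C0H (\prod_(i <- r | P i) G i) x.
Proof.
move=> hG; apply: (big_ind (comm_C0H^~ x)) => //.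
  by apply: comm_C0H_exact; rewrite mul1r mulr1.
by move=> a b; apply: comm_C0HM.
Qed.

Lemma comm_C0H_evalA x q :
    (forall c, comm_C0H (Cv c) x) -> (forall i, comm_C0H (X i) x) ->
    (forall i, comm_C0H (Y i) x) ->
  comm_C0H (evalA Cv X Y q) x.
Proof.
move=> hC hX hY; apply: (big_ind (comm_C0H^~ x)) => [||m _].
- by apply: comm_C0H_exact; rewrite mul0r mulr0.
- by move=> a b; apply: comm_C0HD.
apply: comm_C0HZ; apply: comm_C0HM; first apply: comm_C0HM.
all: by apply: comm_C0H_prod => i _; apply: comm_C0HX.
Qed.

End CommutatorsModuloC0.

Section PBW.
Variables (F : fieldType) (k n : nat) (H : algType F).
Variables (Cv : 'I_k -> H) (X Y : 'I_n -> H).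
Hypothesis Cv_central : forall c, centralH (Cv c).
Variables (gT : finGroupType) (W : {group gT}) (T : gT -> H).
Local Notation poly := {mpoly F[k + n + n]}.
Local Notation pbw := (pbw Cv X Y W T).
Hypothesis pbw_onto : forall h : H, exists f, h = pbw f.
Hypothesis pbw_eq0 : forall f, pbw f = 0 -> forall w, w \in W -> f w = 0.

Lemma pbw_is_additive : additive pbw.
Proof.
move=> f1 f2; rewrite /pbw -sumrB; apply: eq_bigr => w _.
by rewrite !ffunE raddfB mulrBl.
Qed.

HB.instance Definition _ :=
  GRing.isAdditive.Build {ffun gT -> poly} H pbw pbw_is_additive.

Lemma pbw_inj f1 f2 w : pbw f1 = pbw f2 -> w \in W -> f1 w = f2 w.
Proof.
move=> e12 hw; apply/eqP; rewrite -subr_eq0.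
have := @pbw_eq0 (f1 - f2); rewrite raddfB /= e12 subrr => /(_ erefl w hw).
by rewrite !ffunE => ->.
Qed.

Lemma pbw_lmul p P f :
  lmul_lift Cv X Y p P -> P * pbw f = pbw [ffun w => p * f w].
Proof.
move=> hp; rewrite /pbw mulr_sumr; apply: eq_bigr => w _.
by rewrite ffunE hp mulrA.
Qed.

Lemma pbw_coef_C0 f w :
  in_C0H Cv (pbw f) -> w \in W -> in_C0pow k n 1 (f w).
Proof.
move=> [hc hsum] hw.
have [G hG] := fin_all_exists (fun c => pbw_onto (hc c)).
have -> : f w = (\sum_(c < k) [ffun w' => 'X_(@cvar k n c) * G c w']) w.
  apply: pbw_inj hw; rewrite hsum raddf_sum; apply: eq_bigr => c _.
  by rewrite hG (pbw_lmul _ (lmul_lift_cvar X Y Cv_central c)).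
rewrite sum_ffunE; apply: in_ideal_pow_sum => c _; rewrite ffunE mulrC.
exact/in_ideal_powMl/in_ideal_pow_gen.
Qed.

End PBW.

Section C0Prime.
Variables (F : fieldType) (k n : nat).
Local Notation poly := {mpoly F[k + n + n]}.

Definition zeroC : {rmorphism poly -> poly} :=
  comp_mpoly [tuple if (val v < k)%N then 0 else 'X_v | v < k + n + n].

Lemma zeroC_X v : zeroC 'X_v = if (val v < k)%N then 0 else 'X_v.
Proof. by rewrite /= comp_mpolyXU -(tnth_nth 0) tnth_mktuple. Qed.

Lemma C0_congrM (x1 y1 x2 y2 : poly) :
    in_C0pow k n 1 (x1 - y1) -> in_C0pow k n 1 (x2 - y2) ->
  in_C0pow k n 1 (x1 * x2 - y1 * y2).
Proof.
have -> : x1 * x2 - y1 * y2 = x1 * (x2 - y2) + y2 * (x1 - y1).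
  by rewrite mulrBr mulrBr [y2 * x1]mulrC addrA subrK [y2 * y1]mulrC.
by move=> h1 h2; apply: in_ideal_powD; apply: in_ideal_powMl.
Qed.

Lemma in_C0P p : in_C0pow k n 1 p <-> zeroC p = 0.
Proof.
split=> [[N [a [f ->]]] | p0].
  rewrite rmorph_sum big1 // => i _.
  by rewrite rmorphM big_ord1 zeroC_X /= ltn_ord mulr0.
suff : in_C0pow k n 1 (p - zeroC p) by rewrite p0 subr0.
have -> : p - zeroC p =
    \sum_(m <- msupp p) (p@_m *: 'X_[m] - zeroC (p@_m *: 'X_[m])).
  by rewrite sumrB -rmorph_sum -mpolyE.
apply: in_ideal_pow_sum => m _.
rewrite /= comp_mpolyZ -scalerBr -mul_mpolyC; apply: in_ideal_powMl.
rewrite comp_mpolyX -mmap1_id /mmap1.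
apply: (big_ind2 (fun x y => in_C0pow k n 1 (x - y))) => [||v _].
- by rewrite subrr; exact: in_ideal_pow0.
- by move=> ? ? ? ?; apply: C0_congrM.
elim: (m v) => [|e IHe]; first by rewrite !expr0 subrr; exact: in_ideal_pow0.
rewrite !exprS; apply: C0_congrM => //; rewrite tnth_mktuple.
case: ifP => [vk | _]; last by rewrite subrr; exact: in_ideal_pow0.
rewrite subr0 (_ : v = @cvar k n (Ordinal vk)); last exact: val_inj.
exact: in_ideal_pow_gen.
Qed.

Lemma zeroC_xpoly (x : 'rV[F]_n) : zeroC (xpoly k x) = xpoly k x.
Proof.
rewrite rmorph_sum; apply: eq_bigr => i _.
by rewrite /= comp_mpolyZ -/(zeroC _) zeroC_X /= ltnNge leq_addr.
Qed.

Lemma xpolyB (x1 x2 : 'rV[F]_n) : xpoly k (x1 - x2) = xpoly k x1 - xpoly k x2.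
Proof. by rewrite /xpoly -sumrB; apply: eq_bigr => i _; rewrite !mxE scalerBl. Qed.

Lemma mcoeff_xpoly (x : 'rV[F]_n) i : (xpoly k x)@_U_(@xvar k n i) = x 0 i.
Proof.
rewrite raddf_sum (bigD1 i) //= big1 ?addr0 => [|j ji].
  by rewrite mcoeffZ mcoeffXU eqxx mulr1.
by rewrite mcoeffZ mcoeffXU /xvar eq_lshift eq_rshift (negbTE ji) mulr0.
Qed.

Lemma xpoly_eq0 (x : 'rV[F]_n) : (xpoly k x == 0) = (x == 0).
Proof.
apply/eqP/eqP => [x0 | ->].
  by apply/rowP => i; rewrite mxE -mcoeff_xpoly x0 mcoeff0.
by rewrite /xpoly big1 // => i _; rewrite mxE scale0r.
Qed.

Lemma in_C0_mulxpoly (x : 'rV[F]_n) p :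
  x != 0 -> in_C0pow k n 1 (xpoly k x * p) -> in_C0pow k n 1 p.
Proof.
move=> x0 /in_C0P; rewrite rmorphM zeroC_xpoly => /eqP.
by rewrite mulf_eq0 xpoly_eq0 (negbTE x0) => /eqP /in_C0P.
Qed.

End C0Prime.

Lemma mx_faithful_moved_row (F : fieldType) (n : nat) (gT : finGroupType)
    (W : {group gT}) (rG : mx_representation F W n) w :
    mx_faithful rG -> w \in W -> w != 1%g ->
  exists x : 'rV[F]_n, x *m rG (w^-1)%g != x.
Proof.
move=> faithful_rG wW w1.
have [i moved | fixed] := pickP (fun i => row i 1%:M *m rG (w^-1)%g != row i 1%:M).
  by exists (row i 1%:M).
suff /set1P : (w^-1 \in [1 gT])%g by move/eqP; rewrite invg_eq1 (negbTE w1).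
apply: (subsetP faithful_rG); apply/rkerP; split; first by rewrite groupV.
apply/row_matrixP => i; rewrite -[rG _]mul1mx row_mul.
by have /negbFE/eqP := fixed i.
Qed.

Section CentralElements.
Variables (F : fieldType) (k n : nat) (H : algType F).
Variables (Cv : 'I_k -> H) (X Y : 'I_n -> H).
Variables (gT : finGroupType) (W : {group gT}) (rG : mx_representation F W n).
Variable T : gT -> H.
Hypothesis Cv_central : forall c, centralH (Cv c).
Hypothesis X_comm : forall i j, X i * X j = X j * X i.
Hypothesis YX_comm_C0H : forall l x, comm_C0H Cv (Y l) (Xl X x).
Hypothesis T_Xl :
  {in W, forall w x, T w * Xl X x = Xl X (x *m rG (w^-1)%g) * T w}.
Hypothesis faithful_rG : mx_faithful rG.
Local Notation pbw := (pbw Cv X Y W T).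
Hypothesis pbw_onto : forall h : H, exists f, h = pbw f.
Hypothesis pbw_eq0 : forall f, pbw f = 0 -> forall w, w \in W -> f w = 0.

Lemma comm_C0H_evalA_Xl q x : comm_C0H Cv (evalA Cv X Y q) (Xl X x).
Proof.
apply: comm_C0H_evalA => // [c | i]; apply: comm_C0H_exact.
  exact: Cv_central.
rewrite /Xl mulr_sumr mulr_suml.
by apply: eq_bigr => j _; rewrite -scalerAr -scalerAl X_comm.
Qed.

Lemma central_coef_in_C0 u g w :
  centralH u -> u = pbw g -> w \in W -> w != 1%g -> in_C0pow k n 1 (g w).
Proof.
move=> u_central ug wW w1.
have [x moved] := mx_faithful_moved_row faithful_rG wW w1.
pose moved_coef := [ffun w' => xpoly k (x *m rG (w'^-1)%g) * g w'].
have Xl_u : Xl X x * u = pbw [ffun w' => xpoly k x * g w'].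
  by rewrite ug; apply/pbw_lmul/lmul_lift_xpoly.
have u_Xl : in_C0H Cv (u * Xl X x - pbw moved_coef).
  rewrite ug /pbw mulr_suml -sumrB; apply: in_C0H_sum => w' w'W.
  rewrite ffunE lmul_lift_xpoly // -mulrA T_Xl // mulrA -mulrBl.
  exact/in_C0H_mulr/comm_C0H_evalA_Xl.
move: u_Xl; rewrite u_central Xl_u -raddfB.
move=> /(pbw_coef_C0 Cv_central pbw_onto pbw_eq0) /(_ wW).
rewrite !ffunE -mulrBl -xpolyB; apply: in_C0_mulxpoly.
by rewrite subr_eq0 eq_sym.
Qed.

Lemma in_C0pow_center_coef z m f w :
    in_C0pow_center Cv m z -> z = pbw f -> w \in W -> w != 1%g ->
  in_C0pow k n m.+1 (f w).
Proof.
move=> [N [c [u [c_in [u_central ->]]]]] zf wW w1.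
have [g ug] := fin_all_exists (fun i => pbw_onto (u i)).
have -> : f w = (\sum_(i < N) [ffun w' => cpoly n (c i) * g i w']) w.
  apply: (pbw_inj pbw_eq0) wW; rewrite -zf raddf_sum; apply: eq_bigr => i _.
  by rewrite ug (pbw_lmul W T _ (lmul_lift_cpoly X Y Cv_central (c i))).
rewrite sum_ffunE; apply: in_ideal_pow_sum => i _; rewrite ffunE.
apply: in_ideal_powM1; last exact: central_coef_in_C0 (u_central i) (ug i) wW w1.
apply: in_ideal_pow_rmorph (c_in i) => c'.
by rewrite /= comp_mpolyXU -(tnth_nth 0) tnth_mktuple.
Qed.

End CentralElements.

Lemma Yl_delta (F : fieldType) (n : nat) (H : algType F) (Y : 'I_n -> H) l :
  Yl Y (delta_mx l 0) = Y l.
Proof.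
rewrite /Yl (bigD1 l) //= mxE !eqxx scale1r big1 ?addr0 // => j jl.
by rewrite mxE (negbTE jl) scale0r.
Qed.

Theorem corollary3p2
  (R : realType) (n : nat) (gT : finGroupType) (W : {group gT})
  (rG : mx_representation R[i] W n)
  (faithful : mx_faithful rG)
  (gen_refl : W :=: <<reflections rG>>%g)
  (k : nat) (cls : gT -> 'I_k)
  (cls_onto : forall c : 'I_k, exists2 s, s \in reflections rG & cls s = c)
  (cls_conj : {in reflections rG &, forall s t,
                 cls s = cls t <-> exists2 g, g \in W & t = (s ^ g)%g})
  (root : gT -> 'rV[R[i]]_n) (coroot : gT -> 'cV[R[i]]_n)
  (root_ok : {in reflections rG, forall s, root_spec rG s (root s)})
  (coroot_ok : {in reflections rG, forall s, coroot_spec rG s (coroot s)})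
  (H : algType R[i]) (Cv : 'I_k -> H) (X Y : 'I_n -> H) (T : gT -> H)
  (HH : is_generic_RCA rG cls root coroot Cv X Y T)
  (z : H) (m : nat)
  (z_center : centralH z) (z_neq0 : z != 0)
  (z_in : in_C0pow_center Cv m z)
  (f : {ffun gT -> {mpoly R[i][k + n + n]}})
  (z_eq : z = pbw Cv X Y W T f) :
  forall w, w \in W -> w != 1%g ->
    in_ideal_pow (fun c : 'I_k => ('X_(@cvar k n c) : {mpoly R[i][k + n + n]}))
      m.+1 (f w).
Proof.
case: HH => Cv_central [X_comm [_ [[T1 TM] [[T_Xl_conj _] [YX_rel pbw_PBW]]]]].
have YX_comm_C0H l x : comm_C0H Cv (Y l) (Xl X x).
  rewrite /comm_C0H -(Yl_delta Y l) YX_rel; apply: in_C0H_sum => s _.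
  exact/in_C0HZ/in_C0H_Cv.
have T_Xl : {in W, forall w x, T w * Xl X x = Xl X (x *m rG (w^-1)%g) * T w}.
  move=> w wW x; rewrite -(T_Xl_conj w wW x) -!mulrA -TM ?groupV //.
  by rewrite mulVg T1 mulr1.
move=> w wW w1; case: pbw_PBW => pbw_onto pbw_eq0.
exact: (in_C0pow_center_coef Cv_central X_comm YX_comm_C0H T_Xl faithful
  pbw_onto pbw_eq0 z_in z_eq wW w1).
Qed.
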